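(* Let $p\in[1,\infty]$, let $A\in\mathbb{R}^{m\times n}$ have full column rank, and let $\mathcal{A} = \{Ax: x\in\mathbb{R}^n\}$. Let $\Phi\in\mathbb{R}^{s\times m}$ with $s\ge n$, and suppose there are $\sigma_\Phi>0$, $\kappa_\Phi\ge1$ with $$\sigma_\Phi\|y\|_p \le \|\Phi y\|_p \le \kappa_\Phi\sigma_\Phi\|y\|_p\quad\text{for all } y\in\mathcal{A}.$$ Let $\Phi A = QR$ be a thin QR factorization, with $Q\in\mathbb{R}^{s\times n}$ having orthonormal columns and $R\in\mathbb{R}^{n\times n}$ invertible. Then $\kappa_p(AR^{-1}) \le \kappa_\Phi\, s^{|1/p-1/2|}$.
   Context: For $M \in \mathbb{R}^{m\times n}$, $\sigma_p^{\max}(M) = \max_{\|x\|_2=1}\|Mx\|_p$, $\sigma_p^{\min}(M) = \min_{\|x\|_2=1}\|Mx\|_p$, and $\kappa_p(M) = \sigma_p^{\max}(M)/\sigma_p^{\min}(M)$. Convention $1/\infty = 0$. *)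

From Stdlib Require Import Reals Lra Classical ClassicalEpsilon.
Open Scope R_scope.

(* Vectors of length n are functions nat -> R (only indices < n matter);
   an m x n matrix is a function nat -> nat -> R (only i < m, j < n matter). *)

Fixpoint rsum (n : nat) (f : nat -> R) : R :=
  match n with O => 0 | S k => rsum k f + f k end.

Fixpoint rmaxabs (n : nat) (f : nat -> R) : R :=
  match n with O => 0 | S k => Rmax (rmaxabs k f) (Rabs (f k)) end.

Definition matvec (n : nat) (M : nat -> nat -> R) (x : nat -> R) : nat -> R :=
  fun i => rsum n (fun j => M i j * x j).

Definition matmul (k : nat) (A B : nat -> nat -> R) : nat -> nat -> R :=
  fun i j => rsum k (fun l => A i l * B l j).

Inductive pexp := Pfin (p : R) | Pinf.

Definition valid_p (p : pexp) : Prop :=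
  match p with Pfin q => 1 <= q | Pinf => True end.

Definition invp (p : pexp) : R :=
  match p with Pfin q => / q | Pinf => 0 end.

(* x^y for x >= 0, y > 0, with 0^y = 0 *)
Definition rpow0 (x y : R) : R :=
  if Req_EM_T x 0 then 0 else Rpower x y.

Definition pnorm (n : nat) (p : pexp) (x : nat -> R) : R :=
  match p with
  | Pfin q => rpow0 (rsum n (fun i => rpow0 (Rabs (x i)) q)) (/ q)
  | Pinf => rmaxabs n x
  end.

Definition norm2 (n : nat) (x : nat -> R) : R :=
  sqrt (rsum n (fun i => x i * x i)).

(* Supremum of a nonempty bounded-above set (default 0 otherwise). *)
Definition Rsup (E : R -> Prop) : R :=
  match excluded_middle_informative (bound E /\ exists x, E x) with
  | left H => proj1_sig (completeness E (proj1 H) (proj2 H))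
  | right _ => 0
  end.

Definition Rinf (E : R -> Prop) : R := - Rsup (fun y => E (- y)).

(* sigma_p^max(M), sigma_p^min(M) for M : m x n (max/min over the unit 2-sphere;
   these are attained, so they coincide with sup/inf). *)
Definition sigma_max (m n : nat) (p : pexp) (M : nat -> nat -> R) : R :=
  Rsup (fun v => exists x, norm2 n x = 1 /\ v = pnorm m p (matvec n M x)).

Definition sigma_min (m n : nat) (p : pexp) (M : nat -> nat -> R) : R :=
  Rinf (fun v => exists x, norm2 n x = 1 /\ v = pnorm m p (matvec n M x)).

(* kappa_p(M) as an extended real: None = +oo (when sigma_min = 0). *)
Definition kappa (m n : nat) (p : pexp) (M : nat -> nat -> R) : option R :=
  if Req_EM_T (sigma_min m n p M) 0 then None
  else Some (sigma_max m n p M / sigma_min m n p M).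

Definition ext_le (a : option R) (c : R) : Prop :=
  match a with Some x => x <= c | None => False end.

From Stdlib Require Import Reals Lra Lia ClassicalEpsilon FunctionalExtensionality.
Open Scope R_scope.

(* For a unit vector [x], put [y = R^-1 x]; then [Phi A y = Q R y = Q x], and [Q x] is a unit
   vector of [R^s] because [Q] has orthonormal columns. On unit vectors of [R^s] the [p]-norm
   lies between [s^min(0, 1/p - 1/2)] and [s^max(0, 1/p - 1/2)] (Jensen's inequality for
   [t |-> t^(p/2)] applied to the squared entries), so the embedding property pins
   [||A R^-1 x||_p] between [s^min(0, 1/p - 1/2) / (kappa_Phi sigma_Phi)] and
   [s^max(0, 1/p - 1/2) / sigma_Phi]; the ratio of these bounds is [kappa_Phi s^|1/p - 1/2|]. *)

Lemma Rpower_pos x y : 0 < Rpower x y.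
Proof. apply exp_pos. Qed.

Lemma Rpower_1_base y : Rpower 1 y = 1.
Proof. unfold Rpower. rewrite ln_1, Rmult_0_r. apply exp_0. Qed.

Lemma Rpower_inv_base x y : 0 < x -> Rpower (/ x) y = Rpower x (- y).
Proof. intros Hx. unfold Rpower. rewrite ln_Rinv by exact Hx. f_equal; ring. Qed.

Lemma Rpower_le_exp_antitone t a b : 0 < t <= 1 -> a <= b -> Rpower t b <= Rpower t a.
Proof.
  intros Ht Hab.
  assert (Hinv : Rpower (/ t) (- b) <= Rpower (/ t) (- a)).
  { apply Rle_Rpower; [|lra]. rewrite <- Rinv_1. apply Rinv_le_contravar; lra. }
  rewrite !Rpower_inv_base, !Ropp_involutive in Hinv by lra. exact Hinv.
Qed.

Lemma Rpower_mvt g a b : 0 < a < b ->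
  exists c, a < c < b /\ Rpower b g - Rpower a g = g * Rpower c (g - 1) * (b - a).
Proof.
  intros [Ha Hab].
  destruct (MVT_cor2 (fun x => Rpower x g) (fun x => g * Rpower x (g - 1)) a b Hab)
    as [c [Hc Hbetween]].
  - intros c Hc. apply derivable_pt_lim_power. lra.
  - exists c. split; assumption.
Qed.

Lemma Rpower_bernoulli_concave x g : 0 < x -> 0 < g <= 1 ->
  Rpower x g <= 1 + g * (x - 1).
Proof.
  intros Hx Hg.
  destruct (Rtotal_order x 1) as [Hlt | [-> | Hgt]].
  - destruct (Rpower_mvt g x 1) as [c [Hc Hdiff]]; [lra|].
    assert (Hc1 : 1 <= Rpower c (g - 1)).
    { rewrite <- (Rpower_O c) at 1 by lra. apply Rpower_le_exp_antitone; lra. }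
    rewrite Rpower_1_base in Hdiff.
    assert (g * (1 - x) <= g * Rpower c (g - 1) * (1 - x)).
    { rewrite Rmult_assoc, (Rmult_comm (Rpower _ _)). apply Rmult_le_compat_l; nra. }
    lra.
  - rewrite Rpower_1_base. lra.
  - destruct (Rpower_mvt g 1 x) as [c [Hc Hdiff]]; [lra|].
    assert (Hc1 : Rpower c (g - 1) <= 1).
    { rewrite <- (Rpower_O c) at 2 by lra. apply Rle_Rpower; lra. }
    rewrite Rpower_1_base in Hdiff.
    assert (g * Rpower c (g - 1) * (x - 1) <= g * (x - 1)).
    { rewrite Rmult_assoc, (Rmult_comm (Rpower _ _)). apply Rmult_le_compat_l; nra. }
    lra.
Qed.

(* The exponent [g >= 1] case follows from the concave one applied to [x ^ g] and [1 / g]. *)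
Lemma Rpower_bernoulli_convex x g : 0 < x -> 1 <= g ->
  1 + g * (x - 1) <= Rpower x g.
Proof.
  intros Hx Hg.
  assert (Hinvg : 0 < / g <= 1).
  { split; [apply Rinv_0_lt_compat; lra|]. rewrite <- Rinv_1. apply Rinv_le_contravar; lra. }
  pose proof (Rpower_bernoulli_concave (Rpower x g) (/ g) (Rpower_pos x g) Hinvg) as Hb.
  rewrite Rpower_mult, Rinv_r, Rpower_1 in Hb by lra.
  apply (Rmult_le_compat_l g) in Hb; [|lra].
  rewrite Rmult_plus_distr_l, <- Rmult_assoc, Rinv_r, Rmult_1_l in Hb by lra.
  nra.
Qed.
Lemma rpow0_pos x y : 0 < x -> rpow0 x y = Rpower x y.
Proof. intros Hx. unfold rpow0. destruct (Req_EM_T x 0); [lra | reflexivity]. Qed.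

Lemma rpow0_0 y : rpow0 0 y = 0.
Proof. unfold rpow0. destruct (Req_EM_T 0 0); [reflexivity | lra]. Qed.

Lemma rpow0_scal a t g : 0 < a -> 0 <= t -> rpow0 (a * t) g = Rpower a g * rpow0 t g.
Proof.
  intros Ha [Ht | <-].
  - rewrite !rpow0_pos by nra. symmetry. apply Rpower_mult_distr; assumption.
  - rewrite Rmult_0_r, !rpow0_0. ring.
Qed.

Lemma rpow0_abs_sq x q : 0 < q -> rpow0 (Rabs x) q = rpow0 (x * x) (q / 2).
Proof.
  intros Hq. destruct (Req_EM_T x 0) as [-> | Hx].
  - rewrite Rabs_R0, Rmult_0_r, !rpow0_0. reflexivity.
  - assert (Habs : 0 < Rabs x) by (apply Rabs_pos_lt; exact Hx).
    assert (Hsq : x * x = Rpower (Rabs x) 2).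
    { replace 2 with (INR 2) by (simpl; ring). rewrite Rpower_pow by exact Habs.
      simpl. rewrite Rmult_1_r, <- Rabs_mult, Rabs_right; [reflexivity | nra]. }
    rewrite !rpow0_pos by nra. rewrite Hsq, Rpower_mult. f_equal. field.
Qed.

Lemma rpow0_bernoulli_convex t g : 0 <= t -> 1 <= g -> 1 + g * (t - 1) <= rpow0 t g.
Proof.
  intros [Ht | <-] Hg.
  - rewrite rpow0_pos by exact Ht. apply Rpower_bernoulli_convex; assumption.
  - rewrite rpow0_0. lra.
Qed.

Lemma rpow0_bernoulli_concave t g : 0 <= t -> 0 < g <= 1 -> rpow0 t g <= 1 + g * (t - 1).
Proof.
  intros [Ht | <-] Hg.
  - rewrite rpow0_pos by exact Ht. apply Rpower_bernoulli_concave; assumption.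
  - rewrite rpow0_0. lra.
Qed.

Lemma rpow0_le_id t g : 0 <= t <= 1 -> 1 <= g -> rpow0 t g <= t.
Proof.
  intros [[Ht | <-] Ht1] Hg.
  - rewrite rpow0_pos by exact Ht. rewrite <- (Rpower_1 t) at 2 by exact Ht.
    apply Rpower_le_exp_antitone; lra.
  - rewrite rpow0_0. lra.
Qed.

Lemma rpow0_ge_id t g : 0 <= t <= 1 -> g <= 1 -> t <= rpow0 t g.
Proof.
  intros [[Ht | <-] Ht1] Hg.
  - rewrite rpow0_pos by exact Ht. rewrite <- (Rpower_1 t) at 1 by exact Ht.
    apply Rpower_le_exp_antitone; lra.
  - rewrite rpow0_0. lra.
Qed.

Lemma rsum_ext n f g : (forall i, (i < n)%nat -> f i = g i) -> rsum n f = rsum n g.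
Proof.
  induction n as [|n IH]; simpl; intros H; [reflexivity|].
  rewrite IH by (intros; apply H; lia). rewrite H by lia. reflexivity.
Qed.

Lemma rsum_plus n f g : rsum n (fun i => f i + g i) = rsum n f + rsum n g.
Proof. induction n as [|n IH]; simpl; [ring | rewrite IH; ring]. Qed.

Lemma rsum_scal n c f : rsum n (fun i => c * f i) = c * rsum n f.
Proof. induction n as [|n IH]; simpl; [ring | rewrite IH; ring]. Qed.

Lemma rsum_scal_r n c f : rsum n (fun i => f i * c) = rsum n f * c.
Proof. induction n as [|n IH]; simpl; [ring | rewrite IH; ring]. Qed.

Lemma rsum_const n c : rsum n (fun _ => c) = INR n * c.
Proof. induction n as [|n IH]; simpl rsum; [simpl; ring | rewrite IH, S_INR; ring]. Qed.

Lemma rsum_swap n m (f : nat -> nat -> R) :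
  rsum n (fun i => rsum m (fun j => f i j)) = rsum m (fun j => rsum n (fun i => f i j)).
Proof.
  induction n as [|n IH]; simpl.
  - rewrite (rsum_const m 0). ring.
  - rewrite IH, <- rsum_plus. reflexivity.
Qed.

Lemma rsum_le n f g : (forall i, (i < n)%nat -> f i <= g i) -> rsum n f <= rsum n g.
Proof.
  induction n as [|n IH]; simpl; intros H; [lra|].
  apply Rplus_le_compat; [apply IH; intros; apply H|apply H]; lia.
Qed.

Lemma rsum_nonneg n f : (forall i, (i < n)%nat -> 0 <= f i) -> 0 <= rsum n f.
Proof. intros H. rewrite <- (Rmult_0_r (INR n)), <- rsum_const. apply rsum_le, H. Qed.

Lemma rsum_term n f k : (k < n)%nat -> (forall i, (i < n)%nat -> 0 <= f i) -> f k <= rsum n f.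
Proof.
  induction n as [|n IH]; simpl; intros Hk H; [lia|].
  assert (Hrest : 0 <= rsum n f) by (apply rsum_nonneg; intros; apply H; lia).
  destruct (Nat.eq_dec k n) as [-> | Hne].
  - lra.
  - assert (f k <= rsum n f) by (apply IH; [lia | intros; apply H; lia]).
    assert (0 <= f n) by (apply H; lia). lra.
Qed.

Lemma rsum_delta n k (f : nat -> R) : (k < n)%nat ->
  rsum n (fun j => if Nat.eq_dec j k then f j else 0) = f k.
Proof.
  induction n as [|n IH]; simpl; intros Hk; [lia|].
  destruct (Nat.eq_dec n k) as [-> | Hne].
  - rewrite (rsum_ext _ _ (fun _ => 0)), rsum_const; [ring|].
    intros i Hi. destruct (Nat.eq_dec i k); [lia | reflexivity].
  - rewrite IH by lia. ring.
Qed.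

(* Jensen's inequality for [t |-> t ^ g], via the tangent line at [1]. *)
Lemma rsum_rpow0_convex n x g : 1 <= g -> (forall i, (i < n)%nat -> 0 <= x i) ->
  rsum n x = INR n -> INR n <= rsum n (fun i => rpow0 (x i) g).
Proof.
  intros Hg Hx Hsum.
  apply Rle_trans with (rsum n (fun i => (1 - g) + g * x i)).
  - rewrite rsum_plus, rsum_const, rsum_scal, Hsum. lra.
  - apply rsum_le. intros i Hi.
    pose proof (rpow0_bernoulli_convex (x i) g (Hx i Hi) Hg). lra.
Qed.

Lemma rsum_rpow0_concave n x g : 0 < g <= 1 -> (forall i, (i < n)%nat -> 0 <= x i) ->
  rsum n x = INR n -> rsum n (fun i => rpow0 (x i) g) <= INR n.
Proof.
  intros Hg Hx Hsum.
  apply Rle_trans with (rsum n (fun i => (1 - g) + g * x i)).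
  - apply rsum_le. intros i Hi.
    pose proof (rpow0_bernoulli_concave (x i) g (Hx i Hi) Hg). lra.
  - rewrite rsum_plus, rsum_const, rsum_scal, Hsum. lra.
Qed.

Section PowerSums.

Variables (n : nat) (w : nat -> R).
Hypothesis n_pos : (1 <= n)%nat.
Hypothesis w_nonneg : forall i, (i < n)%nat -> 0 <= w i.
Hypothesis w_sum1 : rsum n w = 1.

Let INR_n_pos : 0 < INR n.
Proof. apply lt_0_INR. lia. Qed.

Let w_le1 i : (i < n)%nat -> 0 <= w i <= 1.
Proof. intros Hi. split; [auto|]. rewrite <- w_sum1. apply rsum_term; assumption. Qed.

Let Rpower_n_1_minus g : Rpower (INR n) (1 - g) = INR n / Rpower (INR n) g.
Proof.
  unfold Rminus, Rdiv. rewrite Rpower_plus, Rpower_1, Rpower_Ropp by exact INR_n_pos.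
  reflexivity.
Qed.

(* Jensen is applied to the rescaled weights [n * w i], whose mean is [1]. *)
Let scaled_power_sum g :
  rsum n (fun i => rpow0 (INR n * w i) g) = Rpower (INR n) g * rsum n (fun i => rpow0 (w i) g).
Proof.
  rewrite <- rsum_scal. apply rsum_ext. intros i Hi.
  apply rpow0_scal; [exact INR_n_pos | auto].
Qed.

Let scaled_sum : rsum n (fun i => INR n * w i) = INR n.
Proof. rewrite rsum_scal, w_sum1. ring. Qed.

Let scaled_nonneg i : (i < n)%nat -> 0 <= INR n * w i.
Proof. intros Hi. pose proof (w_nonneg i Hi). nra. Qed.

Lemma power_sum_convex_bounds g : 1 <= g ->
  Rpower (INR n) (1 - g) <= rsum n (fun i => rpow0 (w i) g) <= 1.
Proof.
  intros Hg. pose proof (Rpower_pos (INR n) g). split.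
  - pose proof (rsum_rpow0_convex n _ g Hg scaled_nonneg scaled_sum) as Hj.
    rewrite scaled_power_sum in Hj.
    rewrite Rpower_n_1_minus. apply (Rmult_le_reg_l (Rpower (INR n) g)); [assumption|].
    field_simplify; lra.
  - rewrite <- w_sum1. apply rsum_le. intros i Hi. apply rpow0_le_id; [apply w_le1, Hi | exact Hg].
Qed.

Lemma power_sum_concave_bounds g : 0 < g <= 1 ->
  1 <= rsum n (fun i => rpow0 (w i) g) <= Rpower (INR n) (1 - g).
Proof.
  intros Hg. pose proof (Rpower_pos (INR n) g). split.
  - rewrite <- w_sum1. apply rsum_le. intros i Hi. apply rpow0_ge_id; [apply w_le1, Hi | lra].
  - pose proof (rsum_rpow0_concave n _ g Hg scaled_nonneg scaled_sum) as Hj.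
    rewrite scaled_power_sum in Hj.
    rewrite Rpower_n_1_minus. apply (Rmult_le_reg_l (Rpower (INR n) g)); [assumption|].
    field_simplify; lra.
Qed.

End PowerSums.

Lemma rmaxabs_nonneg n f : 0 <= rmaxabs n f.
Proof.
  induction n as [|n IH]; simpl; [lra|].
  eapply Rle_trans; [exact IH | apply Rmax_l].
Qed.

Lemma rmaxabs_ge n f k : (k < n)%nat -> Rabs (f k) <= rmaxabs n f.
Proof.
  induction n as [|n IH]; simpl; intros Hk; [lia|].
  destruct (Nat.eq_dec k n) as [-> | Hne].
  - apply Rmax_r.
  - eapply Rle_trans; [apply IH; lia | apply Rmax_l].
Qed.

Lemma rmaxabs_le n f M : 0 <= M -> (forall i, (i < n)%nat -> Rabs (f i) <= M) ->
  rmaxabs n f <= M.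
Proof.
  induction n as [|n IH]; simpl; intros HM H; [lra|].
  apply Rmax_lub; [apply IH; auto | apply H; lia].
Qed.

Lemma pnorm_fin_unit_bounds n q v : (1 <= n)%nat -> 1 <= q ->
  rsum n (fun i => v i * v i) = 1 ->
  Rpower (INR n) (Rmin 0 (/ q - / 2)) <= pnorm n (Pfin q) v <=
  Rpower (INR n) (Rmax 0 (/ q - / 2)).
Proof.
  intros Hn Hq Hv. simpl pnorm.
  assert (Hinvq : 0 < / q) by (apply Rinv_0_lt_compat; lra).
  assert (Hsq_nonneg : forall i, (i < n)%nat -> 0 <= v i * v i) by (intros; nra).
  rewrite (rsum_ext n _ (fun i => rpow0 (v i * v i) (q / 2)))
    by (intros; apply rpow0_abs_sq; lra).
  set (S := rsum n (fun i => rpow0 (v i * v i) (q / 2))).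
  assert (Hroot : Rpower (Rpower (INR n) (1 - q / 2)) (/ q) = Rpower (INR n) (/ q - / 2)).
  { rewrite Rpower_mult. f_equal. field. lra. }
  destruct (Rle_dec 2 q) as [Hq2 | Hq2].
  - assert (He : / q - / 2 <= 0) by (assert (/ q <= / 2) by (apply Rinv_le_contravar; lra); lra).
    rewrite Rmin_right, Rmax_left, Rpower_O by (try apply lt_0_INR; lia || lra).
    destruct (power_sum_convex_bounds n _ Hn Hsq_nonneg Hv (q / 2)) as [HSlo HShi]; [lra|].
    pose proof (Rpower_pos (INR n) (1 - q / 2)).
    fold S in HSlo, HShi. rewrite rpow0_pos by lra. split.
    + rewrite <- Hroot. apply Rle_Rpower_l; lra.
    + rewrite <- (Rpower_1_base (/ q)). apply Rle_Rpower_l; lra.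
  - assert (He : 0 <= / q - / 2) by (assert (/ 2 <= / q) by (apply Rinv_le_contravar; lra); lra).
    rewrite Rmin_left, Rmax_right, Rpower_O by (try apply lt_0_INR; lia || lra).
    destruct (power_sum_concave_bounds n _ Hn Hsq_nonneg Hv (q / 2)) as [HSlo HShi]; [lra|].
    fold S in HSlo, HShi. rewrite rpow0_pos by lra. split.
    + rewrite <- (Rpower_1_base (/ q)). apply Rle_Rpower_l; lra.
    + rewrite <- Hroot. apply Rle_Rpower_l; lra.
Qed.

Lemma pnorm_inf_unit_bounds n v : (1 <= n)%nat ->
  rsum n (fun i => v i * v i) = 1 ->
  / sqrt (INR n) <= pnorm n Pinf v <= 1.
Proof.
  intros Hn Hv. simpl pnorm.
  assert (Hn0 : 0 < INR n) by (apply lt_0_INR; lia).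
  assert (Hcoord : forall i, (i < n)%nat -> Rabs (v i) * Rabs (v i) <= 1).
  { intros i Hi. rewrite <- Rabs_mult, Rabs_right by nra. rewrite <- Hv.
    apply (rsum_term n (fun i => v i * v i)); [assumption | intros; nra]. }
  set (M := rmaxabs n v). pose proof (rmaxabs_nonneg n v) as HM. fold M in HM.
  split.
  - assert (HnM : 1 <= INR n * (M * M)).
    { rewrite <- Hv, <- rsum_const. apply rsum_le. intros i Hi.
      pose proof (rmaxabs_ge n v i Hi) as Hvi. fold M in Hvi.
      rewrite <- (Rabs_right (v i * v i)), Rabs_mult by nra.
      apply Rmult_le_compat; auto using Rabs_pos. }
    apply sqrt_le_1_alt in HnM.
    rewrite sqrt_1, sqrt_mult, sqrt_square in HnM by nra.
    pose proof (sqrt_lt_R0 _ Hn0).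
    apply (Rmult_le_reg_l (sqrt (INR n))); [assumption|].
    rewrite Rinv_r by lra. exact HnM.
  - apply rmaxabs_le; [lra|]. intros i Hi. pose proof (Hcoord i Hi).
    pose proof (Rabs_pos (v i)). nra.
Qed.

Lemma norm2_eq1_sumsq n x : norm2 n x = 1 -> rsum n (fun i => x i * x i) = 1.
Proof.
  unfold norm2. intros Hx.
  assert (0 <= rsum n (fun i => x i * x i)) by (apply rsum_nonneg; intros; nra).
  rewrite <- (sqrt_sqrt _ H), Hx. ring.
Qed.

Lemma pnorm_unit_bounds n p v : (1 <= n)%nat -> valid_p p -> norm2 n v = 1 ->
  Rpower (INR n) (Rmin 0 (invp p - / 2)) <= pnorm n p v <=
  Rpower (INR n) (Rmax 0 (invp p - / 2)).
Proof.
  intros Hn Hp Hv%norm2_eq1_sumsq.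
  destruct p as [q|]; simpl in Hp |- *.
  - apply pnorm_fin_unit_bounds; assumption.
  - assert (Hn0 : 0 < INR n) by (apply lt_0_INR; lia).
    rewrite Rmin_right, Rmax_left, Rpower_O by lra.
    rewrite Rminus_0_l, Rpower_Ropp, Rpower_sqrt by exact Hn0.
    apply pnorm_inf_unit_bounds; assumption.
Qed.

Lemma Rsup_le (E : R -> Prop) U : (exists x, E x) -> (forall v, E v -> v <= U) -> Rsup E <= U.
Proof.
  intros Hne Hub. unfold Rsup.
  destruct (excluded_middle_informative _) as [Hbnd | Hnbnd].
  - destruct (completeness E (proj1 Hbnd) (proj2 Hbnd)) as [l Hlub]. simpl.
    apply (proj2 Hlub). intros v Hv. auto.
  - exfalso. apply Hnbnd. split; [exists U; exact Hub | exact Hne].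
Qed.

Lemma Rinf_ge (E : R -> Prop) L : (exists x, E x) -> (forall v, E v -> L <= v) -> L <= Rinf E.
Proof.
  intros [x Hx] Hlb. unfold Rinf.
  assert (Rsup (fun y => E (- y)) <= - L); [|lra].
  apply Rsup_le.
  - exists (- x). rewrite Ropp_involutive. exact Hx.
  - intros v Hv. apply Hlb in Hv. lra.
Qed.

Lemma norm2_basis n k : (k < n)%nat -> norm2 n (fun j => if Nat.eq_dec j k then 1 else 0) = 1.
Proof.
  intros Hk. unfold norm2.
  rewrite (rsum_ext n _ (fun j => if Nat.eq_dec j k then 1 else 0)).
  - rewrite (rsum_delta n k (fun _ => 1)) by exact Hk. apply sqrt_1.
  - intros j Hj. destruct (Nat.eq_dec j k); ring.
Qed.

Lemma kappa_le_of_bounds m n p M lo hi : (1 <= n)%nat -> 0 < lo ->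
  (forall x, norm2 n x = 1 -> lo <= pnorm m p (matvec n M x) <= hi) ->
  ext_le (kappa m n p M) (hi / lo).
Proof.
  intros Hn Hlo Hbnd.
  set (E := fun v => exists x, norm2 n x = 1 /\ v = pnorm m p (matvec n M x)).
  assert (Hne : exists v, E v).
  { eexists. exists (fun j => if Nat.eq_dec j 0 then 1 else 0).
    split; [apply norm2_basis; lia | reflexivity]. }
  assert (Hlohi : lo <= hi) by (destruct Hne as [v [x [Hx _]]]; destruct (Hbnd x Hx); lra).
  assert (Hmax : sigma_max m n p M <= hi).
  { apply Rsup_le; [exact Hne|]. intros v [x [Hx ->]]. apply Hbnd, Hx. }
  assert (Hmin : lo <= sigma_min m n p M).
  { apply Rinf_ge; [exact Hne|]. intros v [x [Hx ->]]. apply Hbnd, Hx. }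
  unfold kappa. destruct (Req_EM_T _ 0) as [Hz | _]; [lra|]. simpl.
  set (smax := sigma_max m n p M) in *. set (smin := sigma_min m n p M) in *.
  assert (Hinv : / smin <= / lo) by (apply Rinv_le_contravar; lra).
  assert (0 < / smin) by (apply Rinv_0_lt_compat; lra).
  assert (0 < / lo) by (apply Rinv_0_lt_compat; lra).
  unfold Rdiv. destruct (Rle_lt_dec 0 smax).
  - apply Rmult_le_compat; lra.
  - nra.
Qed.

Lemma pnorm_ext n p f g : (forall i, (i < n)%nat -> f i = g i) -> pnorm n p f = pnorm n p g.
Proof.
  intros H. destruct p; simpl.
  - f_equal. apply rsum_ext. intros i Hi. rewrite H; auto.
  - induction n as [|n IH]; simpl; [reflexivity|].
    rewrite IH by (intros; apply H; lia). rewrite H by lia. reflexivity.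
Qed.

Lemma matvec_matmul k n M N y i :
  matvec k M (matvec n N y) i = matvec n (matmul k M N) y i.
Proof.
  unfold matvec, matmul.
  transitivity (rsum k (fun l => rsum n (fun j => M i l * N l j * y j))).
  - apply rsum_ext. intros l _. rewrite <- rsum_scal. apply rsum_ext. intros; ring.
  - rewrite rsum_swap. apply rsum_ext. intros j _. rewrite <- rsum_scal_r. reflexivity.
Qed.

Lemma matvec_ext m n M N x i :
  (forall i j, (i < m)%nat -> (j < n)%nat -> M i j = N i j) -> (i < m)%nat ->
  matvec n M x i = matvec n N x i.
Proof. intros H Hi. apply rsum_ext. intros j Hj. rewrite H; auto. Qed.

Lemma matvec_id n M x j :
  (forall j k, (j < n)%nat -> (k < n)%nat -> M j k = if Nat.eq_dec j k then 1 else 0) ->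
  (j < n)%nat -> matvec n M x j = x j.
Proof.
  intros HM Hj. unfold matvec.
  rewrite (rsum_ext n _ (fun k => if Nat.eq_dec k j then x k else 0)).
  - apply rsum_delta, Hj.
  - intros k Hk. rewrite HM by assumption.
    destruct (Nat.eq_dec j k), (Nat.eq_dec k j); subst; try lia; ring.
Qed.

Lemma norm2_orthonormal s n Q x :
  (forall j k, (j < n)%nat -> (k < n)%nat ->
     rsum s (fun i => Q i j * Q i k) = if Nat.eq_dec j k then 1 else 0) ->
  norm2 s (matvec n Q x) = norm2 n x.
Proof.
  intros HQ. unfold norm2, matvec. f_equal.
  rewrite (rsum_ext s _ (fun i => rsum n (fun j => rsum n (fun k => x j * x k * (Q i j * Q i k)))))
    by (intros i _; rewrite <- rsum_scal_r; apply rsum_ext; intros; rewrite <- rsum_scal;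
        apply rsum_ext; intros; ring).
  rewrite rsum_swap. apply rsum_ext. intros j Hj.
  rewrite rsum_swap.
  rewrite (rsum_ext n _ (fun k => if Nat.eq_dec k j then x j * x k else 0)).
  - apply rsum_delta, Hj.
  - intros k Hk. rewrite rsum_scal, HQ by assumption.
    destruct (Nat.eq_dec j k), (Nat.eq_dec k j); subst; try lia; ring.
Qed.

Lemma matvec_QR_inverse s m n Phi A Q Rm Rinv x i :
  (forall i j, (i < s)%nat -> (j < n)%nat -> matmul m Phi A i j = matmul n Q Rm i j) ->
  (forall j k, (j < n)%nat -> (k < n)%nat ->
     matmul n Rm Rinv j k = if Nat.eq_dec j k then 1 else 0) ->
  (i < s)%nat ->
  matvec m Phi (matvec n A (matvec n Rinv x)) i = matvec n Q x i.
Proof.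
  intros HQR HRRinv Hi.
  rewrite matvec_matmul, (matvec_ext s n _ _ _ i HQR Hi), <- matvec_matmul.
  apply rsum_ext. intros j Hj.
  rewrite matvec_matmul, (matvec_id n _ x j HRRinv Hj). reflexivity.
Qed.

Theorem mainTheorem7
  (p : pexp) (m n s : nat)
  (A Phi Q Rm Rinv : nat -> nat -> R) (sigPhi kapPhi : R) :
  valid_p p ->
  (1 <= n)%nat ->
  (forall x : nat -> R, (forall i, (i < m)%nat -> matvec n A x i = 0) ->
     forall j, (j < n)%nat -> x j = 0) ->
  (n <= s)%nat ->
  0 < sigPhi -> 1 <= kapPhi ->
  (forall x : nat -> R,
     sigPhi * pnorm m p (matvec n A x) <= pnorm s p (matvec m Phi (matvec n A x)) /\
     pnorm s p (matvec m Phi (matvec n A x)) <= kapPhi * sigPhi * pnorm m p (matvec n A x)) ->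
  (forall i j, (i < s)%nat -> (j < n)%nat ->
     matmul m Phi A i j = matmul n Q Rm i j) ->
  (forall j k, (j < n)%nat -> (k < n)%nat ->
     rsum s (fun i => Q i j * Q i k) = if Nat.eq_dec j k then 1 else 0) ->
  (forall j k, (j < n)%nat -> (k < n)%nat ->
     matmul n Rm Rinv j k = (if Nat.eq_dec j k then 1 else 0) /\
     matmul n Rinv Rm j k = (if Nat.eq_dec j k then 1 else 0)) ->
  ext_le (kappa m n p (matmul n A Rinv))
         (kapPhi * Rpower (INR s) (Rabs (invp p - / 2))).
Proof.
  intros Hp Hn _ Hns Hsig Hkap Hemb HQR HQ HR.
  set (e := invp p - / 2).
  set (U := Rpower (INR s) (Rmax 0 e)). set (L := Rpower (INR s) (Rmin 0 e)).
  assert (HL : 0 < L) by apply Rpower_pos.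
  assert (Hratio : kapPhi * Rpower (INR s) (Rabs e) = (U / sigPhi) / (L / (kapPhi * sigPhi))).
  { replace (Rabs e) with (Rmax 0 e + - Rmin 0 e)
      by (unfold Rmax, Rmin, Rabs; destruct (Rle_dec 0 e), (Rcase_abs e); lra).
    rewrite Rpower_plus, Rpower_Ropp. fold U L. field. split; lra. }
  rewrite Hratio. apply kappa_le_of_bounds; [exact Hn | apply Rdiv_lt_0_compat; nra |].
  intros x Hx.
  set (y := matvec n Rinv x).
  assert (HAy : matvec n (matmul n A Rinv) x = matvec n A y).
  { apply functional_extensionality. intros i. apply eq_sym, matvec_matmul. }
  assert (HQx : pnorm s p (matvec m Phi (matvec n A y)) = pnorm s p (matvec n Q x)).
  { apply pnorm_ext. intros i Hi. apply (matvec_QR_inverse s m n Phi A Q Rm); [exact HQR | | exact Hi].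
    intros j k Hj Hk. apply HR; assumption. }
  destruct (pnorm_unit_bounds s p (matvec n Q x)) as [HLQ HUQ];
    [lia | exact Hp | rewrite norm2_orthonormal; assumption |].
  fold e U L in HLQ, HUQ. rewrite <- HQx in HLQ, HUQ.
  destruct (Hemb y) as [Hlower Hupper]. rewrite HAy.
  split.
  - apply (Rmult_le_reg_l (kapPhi * sigPhi)); [nra|].
    replace (kapPhi * sigPhi * (L / (kapPhi * sigPhi))) with L by (field; lra). lra.
  - apply (Rmult_le_reg_l sigPhi); [lra|].
    replace (sigPhi * (U / sigPhi)) with U by (field; lra). lra.
Qed.
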